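(* Let $\gamma_1,\dots,\gamma_n\in\mathcal{M}_k\otimes\mathcal{M}_k$ be states with $\mathcal{R}(\gamma_i)=\gamma_i$ for $i=1,\dots,n$. Then there is no vector $v=a\otimes b+c\otimes d\in\mathbb{C}^{k^n}\otimes\mathbb{C}^{k^n}$ with $a,b,c,d\in\mathbb{C}^{k^n}$, $\dim\mathrm{span}\{a,b,c,d\}=2$, such that $\mathrm{tr}\big(S(\gamma_1^\Gamma,\dots,\gamma_n^\Gamma)vv^*\big)<0$. In particular this holds with $\gamma_1=\cdots=\gamma_n$.
   Context: $\mathcal{M}_k$ denotes complex $k\times k$ matrices; $\mathcal{M}_k\otimes\mathcal{M}_m\cong\mathcal{M}_{km}$ via the Kronecker product. A state is a positive semidefinite Hermitian matrix (not necessarily of trace one). Partial transpose: $(\sum_iA_i\otimes B_i)^\Gamma=\sum_iA_i\otimes B_i^t$. Realignment on $\mathcal{M}_k\otimes\mathcal{M}_k$: identify $\mathcal{M}_k$ with $\mathbb{C}^k\otimes\mathbb{C}^k$ via $\mathrm{vec}(vw^t)=v\otimes w$ (extended linearly), and set $\mathcal{R}(A\otimes B)=\mathrm{vec}(A)\mathrm{vec}(B)^t$, extended linearly. Shuffle: if $\gamma_i=\sum_{j=1}^{n_i}A^i_j\otimes B^i_j\in\mathcal{M}_{k}\otimes\mathcal{M}_{k}$, then $S(\gamma_1,\dots,\gamma_n)=\sum_{j_1,\dots,j_n}A^1_{j_1}\otimes\cdots\otimes A^n_{j_n}\otimes B^1_{j_1}\otimes\cdots\otimes B^n_{j_n}\in\mathcal{M}_{k^n}\otimes\mathcal{M}_{k^n}$.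 *)

(* Complex numbers are modelled as C := R[i] for an
   arbitrary real closed field R (R = the real numbers gives the usual C). *)
From HB Require Import structures.
From mathcomp Require Import all_boot all_order all_algebra.
From mathcomp Require Export complex.
Set Implicit Arguments. Unset Strict Implicit. Unset Printing Implicit Defensive.
Import Order.TTheory GRing.Theory Num.Theory.
Local Open Scope ring_scope.

Section QDefs.
Variable R : rcfType.
Local Notation C := R[i].

(* A matrix of
   M_k (x) M_k ~ M_{k^2} (Kronecker product) is indexed by pairs
   ('I_k * 'I_k): the entry at row (i,l), column (j,m) is the coefficient
   of E_ij (x) E_lm. *)
Definition fmx (T : finType) := T -> T -> C.
Definition fvec (T : finType) := T -> C.

Definition fmx_mul (T : finType) (A B : fmx T) : fmx T :=
  fun p q => \sum_(r : T) A p r * B r q.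
Definition fmx_trace (T : finType) (A : fmx T) : C := \sum_(p : T) A p p.
Definition outer (T : finType) (v : fvec T) : fmx T :=
  fun p q => v p * (v q)^*.

Definition hermitian (T : finType) (A : fmx T) : Prop :=
  forall p q, A q p = (A p q)^*.
Definition is_state (T : finType) (A : fmx T) : Prop :=
  hermitian A /\
  forall x : fvec T, 0 <= \sum_(p : T) \sum_(q : T) (x p)^* * A p q * x q.

Definition op2 (k : nat) := fmx ('I_k * 'I_k)%type.

(* partial transpose: (A (x) B)^Gamma = A (x) B^t *)
Definition ptrans (k : nat) (g : op2 k) : op2 k :=
  fun p q => g (p.1, q.2) (q.1, p.2).

(* realignment: R(A (x) B) = vec(A) vec(B)^t with vec(v w^t) = v (x) w *)
Definition realign (k : nat) (g : op2 k) : op2 k :=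
  fun p q => g (p.1, q.1) (p.2, q.2).

(* C^{k^n} is indexed by n-tuples of indices in 'I_k *)
Definition tidx (n k : nat) := {ffun 'I_n -> 'I_k}.

Definition shuffle (n k : nat) (gs : 'I_n -> op2 k)
  : fmx (tidx n k * tidx n k)%type :=
  fun p q => \prod_(s < n) gs s (p.1 s, p.2 s) (q.1 s, q.2 s).

Definition tens (T : finType) (a b : fvec T) : fvec (T * T)%type :=
  fun p => a p.1 * b p.2.

Definition span_dim (T : finType) (s : seq (fvec T)) : nat :=
  \dim <<[seq (finfun x : {ffun T -> C^o}) | x <- s]>>%VS.

End QDefs.

From Pilot Require Import Defs.
From HB Require Import structures.
From mathcomp Require Import all_boot all_order all_algebra.
From mathcomp Require Import complex.
From mathcomp Require Import ring.
Set Implicit Arguments. Unset Strict Implicit. Unset Printing Implicit Defensive.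
Import Order.TTheory GRing.Theory Num.Theory.
Local Open Scope ring_scope.

(* Write [v] through its coefficient matrix [V].  Hermiticity and realignment
   invariance of the [gamma_i] make the sesquilinear form [tr (S(gamma^Gamma) w v^* )]
   invariant under transposing [V] or [W] separately, so its value at [v] only
   depends on [V + V^t].  If [a, b, c, d] span a 2-dimensional space, [V + V^t] is
   a binary quadratic form, which splits into linear factors: [V + V^t = Y W^t + W Y^t],
   so [v] may be replaced by the product vector [Y (x) W].  There the form becomes,
   after reshuffling indices, the value at [(X, Z) |-> Y X * (W Z)^*] of a tensor
   product of the positive semidefinite [gamma_i], hence it is nonnegative. *)

Section PositiveSemidefinite.
Variables (R : rcfType) (T : finType).
Local Notation C := R[i].
Implicit Types (A : fmx R T) (x y : fvec R T).

Definition sesq A x y : C := \sum_p \sum_q (x p)^* * A p q * y q.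

Definition psd A := forall x, 0 <= sesq A x x.

Definition delta (i : T) (t : C) : fvec R T := fun p => if p == i then t else 0.

Lemma sesqDl A x y z : sesq A (x \+ y) z = sesq A x z + sesq A y z.
Proof.
rewrite /sesq -big_split; apply: eq_bigr => p _; rewrite -big_split.
by apply: eq_bigr => q _ /=; rewrite rmorphD /=; ring.
Qed.

Lemma sesqDr A x y z : sesq A x (y \+ z) = sesq A x y + sesq A x z.
Proof.
rewrite /sesq -big_split; apply: eq_bigr => p _; rewrite -big_split.
by apply: eq_bigr => q _ /=; ring.
Qed.

Lemma sum_delta_r (F : T -> C) i t : \sum_q F q * delta i t q = F i * t.
Proof.
rewrite (bigD1 i) //= big1 ?addr0 /delta ?eqxx // => q /negbTE ->.
by rewrite mulr0.
Qed.

Lemma sesq_delta_l A i t y : sesq A (delta i t) y = t^* * \sum_q A i q * y q.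
Proof.
rewrite /sesq (bigD1 i) //= [X in _ + X]big1 => [|p /negbTE pi].
  by rewrite addr0 mulr_sumr /delta eqxx; apply: eq_bigr => q _; rewrite mulrA.
by apply: big1 => q _; rewrite /delta pi conjC0 !mul0r.
Qed.

Lemma sesq_delta_r A x j t :
  sesq A x (delta j t) = (\sum_p (x p)^* * A p j) * t.
Proof. by rewrite /sesq mulr_suml; apply: eq_bigr => p _; rewrite sum_delta_r. Qed.

Lemma sesq_delta A i j s t : sesq A (delta i s) (delta j t) = s^* * A i j * t.
Proof. by rewrite sesq_delta_l sum_delta_r mulrA. Qed.

Lemma psd_diag_ge0 A i : psd A -> 0 <= A i i.
Proof. by move=> /(_ (delta i 1)); rewrite sesq_delta conjC1 mul1r mulr1. Qed.

Lemma hermitian_diag A i : Defs.hermitian A -> (A i i)^* = A i i.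
Proof. by move=> hA; rewrite -(hA i i). Qed.

(* Test [A] against [e_q + t e_p]: the form equals [A q q + t A q p + t^* A p q],
   which [t] can make negative unless [A p q = 0]. *)
Lemma psd_row0 A p q : Defs.hermitian A -> psd A -> A p p = 0 -> A p q = 0.
Proof.
move=> hA pA App; apply/eqP; apply: contraT => z0.
set z := A p q in z0; set t := - (A q q + 1) / z^*.
have := pA (delta q 1 \+ delta p t).
rewrite !(sesqDl, sesqDr) !sesq_delta App conjC1 !mul1r !mulr1 mulr0 mul0r addr0.
have zc0 : z^* != 0 by rewrite conjC_eq0.
have -> : A q p = z^* by rewrite /z hA.
have -> : t^* = - (A q q + 1) / z.
  by rewrite /t fmorph_div rmorphN rmorphD rmorph1 /= hermitian_diag // conjCK.
have -> : A q q + z^* * t + - (A q q + 1) / z * z = - (A q q + 2%:R).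
  by rewrite /t mulrC divfK // divfK //; ring.
rewrite oppr_ge0 => /le_lt_trans/(_ (ltr_wpDl (psd_diag_ge0 q pA) (ltr0Sn _ 1))).
by rewrite ltxx.
Qed.

Definition schur A i : fmx R T := fun p q => A p q - A p i * A i q / A i i.

Lemma schur_hermitian A i : Defs.hermitian A -> Defs.hermitian (schur A i).
Proof.
move=> hA p q; rewrite /schur rmorphB !rmorphM fmorphV /= -!hA.
by ring.
Qed.

Lemma sum_conj_col A x i : Defs.hermitian A ->
  \sum_p (x p)^* * A p i = (\sum_q A i q * x q)^*.
Proof.
move=> hA; rewrite rmorph_sum; apply: eq_bigr => p _.
by rewrite rmorphM /= -hA mulrC.
Qed.

Lemma sesq_schur A i x : Defs.hermitian A ->
  sesq (schur A i) x x =
  sesq A x x - (\sum_q A i q * x q)^* * (\sum_q A i q * x q) / A i i.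
Proof.
move=> hA; rewrite -sum_conj_col // mulr_suml mulr_suml /sesq -sumrB.
apply: eq_bigr => p _; rewrite mulr_sumr mulr_suml -sumrB.
by apply: eq_bigr => q _; rewrite /schur; ring.
Qed.

(* Test [A] against [x - (z / A i i) e_i] with [z = (A x)_i]. *)
Lemma schur_psd A i : Defs.hermitian A -> psd A -> A i i != 0 -> psd (schur A i).
Proof.
move=> hA pA Aii0 x; rewrite sesq_schur //.
set z := \sum_q A i q * x q; set t := - (z / A i i).
have := pA (x \+ delta i t).
rewrite !(sesqDl, sesqDr) sesq_delta_l sesq_delta_r sesq_delta sum_conj_col // -/z.
have -> : t^* = - (z^* / A i i).
  by rewrite /t rmorphN fmorph_div /= hermitian_diag.
suff -> : sesq A x x + z^* * t + (- (z^* / A i i) * z + - (z^* / A i i) * A i i * t)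
  = sesq A x x - z^* * z / A i i by [].
by rewrite /t; field.
Qed.

Definition diag_support A := [set p | A p p != 0].

Lemma diag_support_schur A i : Defs.hermitian A -> psd A -> A i i != 0 ->
  (#|diag_support (schur A i)| < #|diag_support A|)%N.
Proof.
move=> hA pA Aii0; apply/proper_card/properP; split.
  apply/subsetP => p; rewrite !inE; apply: contra => /eqP App.
  by rewrite /schur App psd_row0 // !mul0r subr0.
by exists i; rewrite !inE // /schur negbK mulrK ?subrr // unitfE.
Qed.

(* Cholesky-type factorisation, by induction on the number of nonzero diagonal
   entries: peel off the rank one part [A_{. i} A_{i .} / A_{i i}]. *)
Lemma psd_gram_le N A : Defs.hermitian A -> psd A -> (#|diag_support A| <= N)%N ->
  {L : 'I_N -> fvec R T | forall p q, A p q = \sum_j (L j p)^* * L j q}.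
Proof.
elim: N A => [|N IH] A hA pA leN.
  exists (fun _ _ => 0) => p q; rewrite big_ord0; apply: psd_row0 => //.
  move: leN; rewrite leqn0 cards_eq0 => /eqP/setP/(_ p).
  by rewrite !inE => /negbFE/eqP.
have [i /= Aii0 | diag0] := pickP [pred p | A p p != 0]; last first.
  exists (fun _ _ => 0) => p q; rewrite big1 => [|j _]; last by rewrite mulr0.
  by apply: psd_row0 => //; move/negbFE/eqP: (diag0 p).
have [L HL] := IH _ (schur_hermitian i hA) (schur_psd hA pA Aii0)
  (leq_trans (diag_support_schur hA pA Aii0) leN).
set s := sqrtC (A i i).
have ss : s * s = A i i by rewrite -expr2 sqrtCK.
have sc : s^* = s by apply: geC0_conj; rewrite sqrtC_ge0 psd_diag_ge0.
have s0 : s != 0 by apply: contraNneq Aii0 => s0; rewrite -ss s0 mul0r.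
exists (fun j p => if unlift ord0 j is Some j' then L j' p else A i p / s).
move=> p q; rewrite big_ord_recl /= unlift_none.
under eq_bigr do rewrite liftK.
rewrite -HL /schur rmorphM fmorphV /= sc -hA -ss.
by field.
Qed.

End PositiveSemidefinite.

Section TensorProduct.
Variables (R : rcfType) (I U V : finType) (ev : V -> I -> U) (g : I -> fmx R U).

Definition tensor_pull : fmx R V := fun X Z => \prod_s g s (ev X s) (ev Z s).

(* Expanding the product of the Gram factorisations writes the form as a sum of
   squared moduli, one for each choice of Gram vector in every factor. *)
Lemma tensor_pull_psd :
  (forall s, Defs.hermitian (g s) /\ psd (g s)) -> psd tensor_pull.
Proof.
move=> hg u.
pose L s := sval (psd_gram_le (proj1 (hg s)) (proj2 (hg s)) (max_card _)).
have HL s : forall p q, g s p q = \sum_j (L s j p)^* * L s j q.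
  exact: svalP (psd_gram_le (proj1 (hg s)) (proj2 (hg s)) (max_card _)).
pose w (f : {ffun I -> 'I_#|U|}) := \sum_Z (\prod_s L s (f s) (ev Z s)) * u Z.
have gramE X Z : tensor_pull X Z =
    \sum_(f : {ffun I -> 'I_#|U|}) \prod_s ((L s (f s) (ev X s))^* * L s (f s) (ev Z s)).
  by rewrite /tensor_pull; under eq_bigr do rewrite HL; exact: bigA_distr_bigA.
have -> : sesq tensor_pull u u = \sum_f (w f)^* * w f.
  rewrite /sesq; under eq_bigr do under eq_bigr do rewrite gramE mulr_sumr mulr_suml.
  under eq_bigr do rewrite exchange_big; rewrite exchange_big; apply: eq_bigr => f _.
  rewrite /w rmorph_sum mulr_suml; apply: eq_bigr => X _; rewrite mulr_sumr.
  apply: eq_bigr => Z _; rewrite big_split /= rmorphM rmorph_prod; ring.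
by apply: sumr_ge0 => f _; rewrite mulrC mul_conjC_ge0.
Qed.

End TensorProduct.

Lemma swap_inj (A : finType) : injective (fun P : A * A => (P.2, P.1)).
Proof. by move=> [x y] [x' y'] [-> ->]. Qed.

Section ShuffledForm.
Variables (R : rcfType) (n k : nat) (gs : 'I_n -> op2 R k).
Local Notation C := R[i].
Local Notation TT := (tidx n k).
Hypothesis gs_state_realign : forall s, is_state (gs s) /\
  (forall p q, realign (gs s) p q = gs s p q).

Lemma gs_swap23 s i j l m : gs s (i, j) (l, m) = gs s (i, l) (j, m).
Proof. exact: (proj2 (gs_state_realign s)) (i, l) (j, m). Qed.

Lemma gs_swap14 s i j l m : gs s (m, l) (j, i) = gs s (i, l) (j, m).
Proof.
have hA := proj1 (proj1 (gs_state_realign s)).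
by rewrite hA -gs_swap23 -hA.
Qed.

(* [ptform V W = tr (S(gs^Gamma) w v^* )] for the vectors [v], [w] of
   [C^{k^n} (x) C^{k^n}] with coefficient matrices [V], [W]. *)
Definition ptform (V W : TT -> TT -> C) : C :=
  \sum_P \sum_r shuffle (fun s => ptrans (gs s)) P r * (W r.1 r.2 * (V P.1 P.2)^*).

Lemma eq_ptform V1 V2 W1 W2 : (forall x y, V1 x y = V2 x y) ->
  (forall x y, W1 x y = W2 x y) -> ptform V1 W1 = ptform V2 W2.
Proof.
by move=> EV EW; apply: eq_bigr => P _; apply: eq_bigr => r _; rewrite EV EW.
Qed.

Lemma ptformTl V W : ptform (fun x y => V y x) W = ptform V W.
Proof.
rewrite /ptform (reindex_inj (@swap_inj TT)) /=; apply: eq_bigr => P _.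
apply: eq_bigr => r _; congr (_ * _); apply: eq_bigr => s _.
by rewrite /ptrans gs_swap14.
Qed.

Lemma ptformTr V W : ptform V (fun x y => W y x) = ptform V W.
Proof.
rewrite /ptform; apply: eq_bigr => P _.
rewrite (reindex_inj (@swap_inj TT)) /=; apply: eq_bigr => r _.
congr (_ * _); apply: eq_bigr => s _.
by rewrite /ptrans gs_swap23.
Qed.

Lemma ptformDl V1 V2 W :
  ptform (fun x y => V1 x y + V2 x y) W = ptform V1 W + ptform V2 W.
Proof.
rewrite /ptform -big_split; apply: eq_bigr => P _; rewrite -big_split.
by apply: eq_bigr => r _ /=; rewrite rmorphD /=; ring.
Qed.

Lemma ptformDr V W1 W2 :
  ptform V (fun x y => W1 x y + W2 x y) = ptform V W1 + ptform V W2.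
Proof.
rewrite /ptform -big_split; apply: eq_bigr => P _; rewrite -big_split.
by apply: eq_bigr => r _ /=; ring.
Qed.

Lemma ptform_symmetrize V :
  ptform (fun x y => V x y + V y x) (fun x y => V x y + V y x) = 4%:R * ptform V V.
Proof.
set S := fun x y => V x y + V y x.
rewrite ptformDl (ptformTl V) /S ptformDr (ptformTr V V); ring.
Qed.

Lemma ptform_eq_sym V V' : (forall x y, V x y + V y x = V' x y + V' y x) ->
  ptform V V = ptform V' V'.
Proof.
move=> EV; apply: (@mulfI _ 4%:R); first by rewrite pnatr_eq0.
by rewrite -!ptform_symmetrize; apply: eq_ptform.
Qed.

(* For [V = y (x) w] the form is the [tensor_pull] of the [gs] evaluated at
   the vector [(X, Z) |-> y X * (w Z)^*]. *)
Lemma ptform_rank1_ge0 (y w : fvec R TT) :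
  0 <= ptform (fun x z => y x * w z) (fun x z => y x * w z).
Proof.
have := tensor_pull_psd (fun (X : TT * TT) s => (X.1 s, X.2 s))
  (fun s => proj1 (gs_state_realign s)) (fun X => y X.1 * (w X.2)^*).
suff -> : ptform (fun x z => y x * w z) (fun x z => y x * w z) =
  sesq (tensor_pull (fun (X : TT * TT) s => (X.1 s, X.2 s)) gs)
    (fun X => y X.1 * (w X.2)^*) (fun X => y X.1 * (w X.2)^*) by [].
pose phi (Q : (TT * TT) * (TT * TT)) := ((Q.1.1, Q.2.2), (Q.2.1, Q.1.2)).
have phi_inj : injective phi by move=> [[? ?] [? ?]] [[? ?] [? ?]] [-> -> -> ->].
rewrite /ptform /sesq !pair_bigA (reindex_inj phi_inj) /=; apply: eq_bigr => Q _.
by rewrite /tensor_pull /shuffle /ptrans /= !rmorphM /= conjCK; ring.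
Qed.

End ShuffledForm.

Lemma dimv2_span (K : fieldType) (vT : vectType K) (U : {vspace vT}) :
  \dim U = 2 -> exists e f : vT, forall v, v \in U -> exists a b, v = a *: e + b *: f.
Proof.
move=> dimU; have coordU v (Uv : v \in U) := coord_vbasis Uv.
move: (vbasis U) coordU; move: (\dim U) dimU => _ -> X coordU.
exists X`_0, X`_1 => v /coordU ->.
exists (coord X ord0 v), (coord X (lift ord0 ord0) v).
by rewrite !big_ord_recl big_ord0 addr0.
Qed.

(* [(y1 X + y2 Y) (w1 X + w2 Y) = m11 X^2 + B X Y + m22 Y^2] *)
Lemma binary_form_factor (C : numClosedFieldType) (m11 B m22 : C) :
  exists y1 y2 w1 w2 : C, [/\ y1 * w1 = m11, y1 * w2 + y2 * w1 = B & y2 * w2 = m22].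
Proof.
have [->|m0] := eqVneq m11 0; first by exists 0, 1, B, m22; split; ring.
set sq := sqrtC (B ^+ 2 - 4%:R * m11 * m22).
have sqE : sq ^+ 2 = B ^+ 2 - 4%:R * m11 * m22 by rewrite sqrtCK.
have two0 : (2%:R : C) != 0 by rewrite pnatr_eq0.
exists 1, ((B - sq) / (2%:R * m11)), m11, ((B + sq) / 2%:R); split.
- by rewrite mul1r.
- by field.
- have -> : (B - sq) / (2%:R * m11) * ((B + sq) / 2%:R)
      = (B ^+ 2 - sq ^+ 2) / (4%:R * m11).
    by field.
  by rewrite sqE; field.
Qed.

Definition in_span2 (T : Type) (C : pzRingType) (e f x : T -> C) :=
  exists a b, forall p, x p = a * e p + b * f p.

Lemma symmetrized_rank2_factor (C : numClosedFieldType) (T : Type)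
    (e f a b c d : T -> C) :
  in_span2 e f a -> in_span2 e f b -> in_span2 e f c -> in_span2 e f d ->
  exists Y W : T -> C, forall x z,
    a x * b z + c x * d z + (a z * b x + c z * d x) = Y x * W z + Y z * W x.
Proof.
move=> [a1 [a2 ha]] [b1 [b2 hb]] [c1 [c2 hc]] [d1 [d2 hd]].
have [y1 [y2 [w1 [w2 [E11 E12 E22]]]]] := binary_form_factor (a1 * b1 + c1 * d1)
  (a1 * b2 + a2 * b1 + c1 * d2 + c2 * d1) (a2 * b2 + c2 * d2).
exists (fun x => y1 * e x + y2 * f x), (fun x => w1 * e x + w2 * f x) => x z.
rewrite !ha !hb !hc !hd.
transitivity (2%:R * (a1 * b1 + c1 * d1) * (e x * e z)
  + (a1 * b2 + a2 * b1 + c1 * d2 + c2 * d1) * (e x * f z + f x * e z)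
  + 2%:R * (a2 * b2 + c2 * d2) * (f x * f z)); first by ring.
by rewrite -E11 -E12 -E22; ring.
Qed.

Theorem mainTheorem19 (R : rcfType) (n k : nat) (gs : 'I_n -> op2 R k) :
  (forall s : 'I_n, is_state (gs s) /\
     (forall p q, realign (gs s) p q = gs s p q)) ->
  ~ (exists a b c d : fvec R (tidx n k),
       span_dim [:: a; b; c; d] = 2%N /\
       fmx_trace (fmx_mul (shuffle (fun s => ptrans (gs s)))
                          (outer (fun p => tens a b p + tens c d p))) < 0).
Proof.
move=> gs_ok [a [b [c [d [dim2 tr_neg]]]]].
move: dim2; rewrite /span_dim; set U := (X in \dim X) => /dimv2_span[e [f spanU]].
have spanned (x : fvec R (tidx n k)) : finfun x \in U -> in_span2 e f x.
  move=> /spanU [al [be xE]]; exists al, be => p.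
  by rewrite -[x p](ffunE x) xE !ffunE.
have [sa sb sc sd] :
    [/\ in_span2 e f a, in_span2 e f b, in_span2 e f c & in_span2 e f d].
  by split; apply: spanned; apply: memv_span; rewrite !inE eqxx ?orbT.
have [Y [W symE]] := symmetrized_rank2_factor sa sb sc sd.
have := ptform_rank1_ge0 gs_ok Y W.
rewrite -(ptform_eq_sym gs_ok (V := fun x z => a x * b z + c x * d z) symE).
by move/(lt_le_trans tr_neg); rewrite ltxx.
Qed.
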